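(* Let $X$ be a nominal set and $g:\mathcal V\to X$ any function. Then $g\in RX$ if and only if (1) $x\# g(x)$ for all $x\in\mathcal V$, and (2) there is a finite set $S\subseteq\mathcal V$ such that $\mathsf{supp}(g(x))\subseteq S$ for all $x\in\mathcal V$ and $g$ is constant on $\mathcal V\setminus S$.
   Context: Nominal sets over a countably infinite set $\mathcal V$ of names (sets with an action of finite permutations of $\mathcal V$, every element having a finite support; $\mathsf{supp}(u)$ the least support, $x\#u$ iff $x\notin\mathsf{supp}(u)$). $[\mathcal V,X]$ denotes the nominal set of functions $\mathcal V\to X$ that are finitely supported under $(\pi\cdot f)(x)=\pi\cdot f(\pi^{-1}(x))$. $RX=\{g\in[\mathcal V,X]\mid \forall x\in\mathcal V,\ x\#g(x)\}$. *)

(* Nominal sets over the countably infinite set of names V := nat. *)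
From Stdlib Require Import List.
Import ListNotations.

Record fperm := FPerm {
  pf : nat -> nat;
  pinv : nat -> nat;
  pfK : forall x, pinv (pf x) = x;
  pinvK : forall x, pf (pinv x) = x;
  pfin : exists l : list nat, forall x, ~ In x l -> pf x = x
}.

Definition pid : fperm.
Proof.
  refine (FPerm (fun x => x) (fun x => x) _ _ _); try reflexivity.
  exists nil; intros x _; reflexivity.
Defined.

Definition pcomp (p q : fperm) : fperm.
Proof.
  refine (FPerm (fun x => pf p (pf q x)) (fun x => pinv q (pinv p x)) _ _ _).
  - intro x; rewrite pfK, pfK; reflexivity.
  - intro x; rewrite pinvK, pinvK; reflexivity.
  - destruct (pfin p) as [lp Hp]; destruct (pfin q) as [lq Hq].
    exists (lp ++ lq); intros x Hx.
    rewrite Hq by (intro H; apply Hx, in_or_app; right; exact H).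
    apply Hp; intro H; apply Hx, in_or_app; left; exact H.
Defined.

Definition fixes (S : list nat) (p : fperm) : Prop :=
  forall x, In x S -> pf p x = x.

Definition supports {A : Type} (act : fperm -> A -> A) (S : list nat) (u : A) : Prop :=
  forall p, fixes S p -> act p u = u.

(* Nominal sets: a set with an action of finite permutations (well defined on
   permutations, i.e. depending only on the underlying bijection), every
   element having a finite support. *)
Record nominal := Nominal {
  nom :> Type;
  act : fperm -> nom -> nom;
  act_id : forall u, act pid u = u;
  act_comp : forall p q u, act p (act q u) = act (pcomp p q) u;
  act_ext : forall p q u, (forall x, pf p x = pf q x) -> act p u = act q u;
  nom_fin : forall u, exists S : list nat, supports act S u
}.

(* x ∈ supp(u): x lies in every finite support of u (supp(u) = least finite support) *)
Definition in_supp (X : nominal) (x : nat) (u : X) : Prop :=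
  forall S : list nat, supports (act X) S u -> In x S.

Definition fresh (X : nominal) (x : nat) (u : X) : Prop := ~ in_supp X x u.

Definition fun_act (X : nominal) (p : fperm) (f : nat -> X) : nat -> X :=
  fun x => act X p (f (pinv p x)).

Definition fun_finsupp (X : nominal) (f : nat -> X) : Prop :=
  exists S : list nat, forall p, fixes S p -> forall x, fun_act X p f x = f x.

Definition inR (X : nominal) (g : nat -> X) : Prop :=
  fun_finsupp X g /\ forall x, fresh X x (g x).

From Stdlib Require Import List Classical Lia Arith.
Import ListNotations.

(* Two facts about supports are needed:
   - a set A\{a} still supports u as soon as some other support of u avoids
     a ([supports_remove]); iterating this, every list containing supp(u)
     supports u ([supports_of_supp]).  Its proof renames a to a fresh b via
     (a b), which fixes u, and then realises p as p∘(a a') with (a a') fixing u.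
   - a support avoiding a exists whenever a # u ([fresh_support]).
   For a function g : V -> X supported by S we then show: g(x) is supported by
   S ∪ {x}, so supp(g x) ⊆ S when x # g(x); and for x, z ∉ S we have
   g(z) = (x z)·g(x), which equals g(x) once z is also fresh for g(x).
   Conversely, if every g(x) is supported by S and g is constant off S, then
   S supports g. *)

Definition swap (a b x : nat) : nat :=
  if Nat.eq_dec x a then b else if Nat.eq_dec x b then a else x.

Lemma swap_involutive a b x : swap a b (swap a b x) = x.
Proof. unfold swap; repeat (destruct Nat.eq_dec; subst; try congruence). Qed.

Lemma swap_other a b x : x <> a -> x <> b -> swap a b x = x.
Proof. intros; unfold swap; repeat destruct Nat.eq_dec; congruence. Qed.

Lemma swap_left a b : swap a b a = b.
Proof. unfold swap; destruct Nat.eq_dec; congruence. Qed.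

Lemma swap_right a b : swap a b b = a.
Proof. unfold swap; repeat destruct Nat.eq_dec; congruence. Qed.

Definition tperm (a b : nat) : fperm.
Proof.
  refine (FPerm (swap a b) (swap a b) (swap_involutive a b) (swap_involutive a b) _).
  exists [a; b]; intros x Hx; apply swap_other; intro; subst; simpl in Hx; tauto.
Defined.

Lemma tperm_involutive (X : nominal) a b (u : X) :
  act X (tperm a b) (act X (tperm a b) u) = u.
Proof.
  rewrite act_comp; rewrite <- (act_id X u) at 2; apply act_ext.
  intro x; apply swap_involutive.
Qed.

Lemma fresh_name (l : list nat) : exists n, ~ In n l.
Proof.
  exists (S (fold_right plus 0 l)); intro H.
  assert (Hle : forall x, In x l -> x <= fold_right plus 0 l).
  { clear H; induction l as [|y l IH]; simpl; intros x Hx; [tauto|].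
    destruct Hx as [<-|Hx]; [lia|specialize (IH x Hx); lia]. }
  specialize (Hle _ H); lia.
Qed.

Section Supports.
Variable X : nominal.

Lemma supports_mono (A C : list nat) (u : X) :
  supports (act X) A u -> incl A C -> supports (act X) C u.
Proof. intros H HC p Hp; apply H; intros x Hx; apply Hp, HC, Hx. Qed.

Lemma tperm_fresh_fixes (A : list nat) (u : X) a b :
  supports (act X) A u -> ~ In a A -> ~ In b A -> act X (tperm a b) u = u.
Proof. intros HA Ha Hb; apply HA; intros x Hx; apply swap_other; congruence. Qed.

Lemma supports_tperm_image (A : list nat) (u : X) a b :
  supports (act X) A u -> act X (tperm a b) u = u ->
  supports (act X) (map (swap a b) A) u.
Proof.
  intros HA Hab q Hq.
  assert (Hconj : act X (pcomp (tperm a b) (pcomp q (tperm a b))) u = u).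
  { apply HA; intros x Hx; simpl.
    rewrite Hq by (apply in_map, Hx); apply swap_involutive. }
  rewrite <- !act_comp, Hab in Hconj.
  rewrite <- (tperm_involutive X a b (act X q u)), Hconj; exact Hab.
Qed.

Lemma supports_remove (A B C : list nat) (a : nat) (u : X) :
  supports (act X) A u -> supports (act X) B u -> ~ In a B ->
  (forall x, In x A -> x <> a -> In x C) -> supports (act X) C u.
Proof.
  intros HA HB HaB HC p Hp.
  pose proof (pinvK p a) as Hpa'; revert Hpa'; generalize (pinv p a) as a'.
  intros a' Hpa'.
  destruct (Nat.eq_dec a' a) as [Ea|Ea].
  - apply HA; intros x Hx; destruct (Nat.eq_dec x a) as [->|Hxa].
    + rewrite <- Ea at 1; exact Hpa'.
    + apply Hp, HC; auto.
  - assert (Ha'A : ~ In a' A).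
    { intro H; assert (pf p a' = a') by (apply Hp, HC; auto); congruence. }
    destruct (fresh_name (a :: a' :: A ++ B)) as [b Hb].
    simpl in Hb; rewrite in_app_iff in Hb.
    assert (Hrenamed : supports (act X) (map (swap a b) A) u).
    { apply supports_tperm_image; auto.
      apply (tperm_fresh_fixes B); tauto. }
    assert (Hswap : act X (tperm a a') u = u).
    { apply (tperm_fresh_fixes _ _ _ _ Hrenamed); intros Hin;
        apply in_map_iff in Hin as [x [Ex Hx]]; unfold swap in Ex;
        repeat destruct Nat.eq_dec; subst; tauto. }
    assert (Hcomp : act X (pcomp p (tperm a a')) u = u).
    { apply HA; intros x Hx; simpl; destruct (Nat.eq_dec x a) as [->|Hxa].
      - rewrite swap_left; exact Hpa'.
      - rewrite swap_other by (auto; intros ->; auto); apply Hp, HC; auto. }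
    rewrite <- act_comp, Hswap in Hcomp; exact Hcomp.
Qed.

Lemma fresh_support a (u : X) :
  fresh X a u -> exists B, supports (act X) B u /\ ~ In a B.
Proof.
  intro H; apply not_all_ex_not in H as [B HB].
  exists B; apply imply_to_and, HB.
Qed.

Lemma supports_of_supp (S : list nat) (u : X) :
  (forall y, in_supp X y u -> In y S) -> supports (act X) S u.
Proof.
  intro HS; destruct (nom_fin X u) as [T HT].
  assert (H : supports (act X) (S ++ T) u)
    by (apply (supports_mono T); auto; intros x Hx; apply in_app_iff; auto).
  clear HT; induction T as [|a T IH].
  - rewrite app_nil_r in H; exact H.
  - apply IH; destruct (in_dec Nat.eq_dec a S) as [Ha|Ha].
    + apply (supports_mono _ _ _ H); intros x Hx.
      rewrite in_app_iff in *; simpl in Hx; intuition congruence.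
    + destruct (fresh_support a u (fun Hi => Ha (HS a Hi))) as [B [HB HaB]].
      apply (supports_remove _ B _ a u H HB HaB); intros x Hx Hxa.
      rewrite in_app_iff in *; simpl in Hx; intuition congruence.
Qed.

End Supports.

Section Functions.
Variable X : nominal.

Definition fun_supports (S : list nat) (g : nat -> X) : Prop :=
  forall p, fixes S p -> forall x, fun_act X p g x = g x.

Variables (S : list nat) (g : nat -> X).

Lemma fun_supports_value x :
  fun_supports S g -> supports (act X) (x :: S) (g x).
Proof.
  intros Hg p Hp; specialize (Hg p (fun z Hz => Hp z (or_intror Hz)) x).
  unfold fun_act in Hg.
  replace (pinv p x) with x in Hg; [exact Hg|].
  rewrite <- (Hp x (or_introl eq_refl)) at 2; symmetry; apply pfK.
Qed.

Lemma fun_supports_supp x y :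
  fun_supports S g -> fresh X x (g x) -> in_supp X y (g x) -> In y S.
Proof.
  intros Hg Hx Hy; destruct (Hy _ (fun_supports_value x Hg)) as [<-|HyS]; [destruct (Hx Hy)|exact HyS].
Qed.

Lemma fun_supports_swap x z :
  fun_supports S g -> ~ In x S -> ~ In z S -> g z = act X (tperm x z) (g x).
Proof.
  intros Hg Hx Hz.
  assert (Hfix : fixes S (tperm x z))
    by (intros w Hw; apply swap_other; intros ->; tauto).
  rewrite <- (Hg _ Hfix z); unfold fun_act; simpl; rewrite swap_right; reflexivity.
Qed.

Lemma fun_supports_const x y :
  fun_supports S g -> (forall w, fresh X w (g w)) ->
  ~ In x S -> ~ In y S -> g x = g y.
Proof.
  intros Hg Hfr Hx Hy.
  destruct (fresh_support X x (g x) (Hfr x)) as [Tx [HTx HxT]].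
  destruct (fresh_support X y (g y) (Hfr y)) as [Ty [HTy HyT]].
  destruct (fresh_name (S ++ Tx ++ Ty)) as [z Hz]; rewrite !in_app_iff in Hz.
  assert (Hzx : g z = g x).
  { rewrite (fun_supports_swap x z) by tauto; apply (tperm_fresh_fixes X Tx); tauto. }
  assert (Hzy : g z = g y).
  { rewrite (fun_supports_swap y z) by tauto; apply (tperm_fresh_fixes X Ty); tauto. }
  congruence.
Qed.

Lemma fun_supports_of_values :
  (forall x, supports (act X) S (g x)) ->
  (forall x y, ~ In x S -> ~ In y S -> g x = g y) -> fun_supports S g.
Proof.
  intros Hval Hconst p Hp x; unfold fun_act.
  destruct (in_dec Nat.eq_dec x S) as [Hx|Hx].
  - replace (pinv p x) with x by (rewrite <- (Hp x Hx) at 2; symmetry; apply pfK).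
    apply Hval, Hp.
  - assert (Hx' : ~ In (pinv p x) S).
    { intro H; pose proof (Hp _ H) as E; rewrite pinvK in E; rewrite <- E in H; auto. }
    rewrite (Hconst (pinv p x) x Hx' Hx); apply Hval, Hp.
Qed.

End Functions.

Theorem lemma4p12 (X : nominal) (g : nat -> X) :
  inR X g <->
  ((forall x, fresh X x (g x)) /\
   exists S : list nat,
     (forall x y, in_supp X y (g x) -> In y S) /\
     (forall x y, ~ In x S -> ~ In y S -> g x = g y)).
Proof.
  split.
  - intros [[S HS] Hfr]; split; [exact Hfr|].
    exists S; split.
    + intros x y; apply (fun_supports_supp X S g x y HS (Hfr x)).
    + intros x y; apply (fun_supports_const X S g x y HS Hfr).
  - intros [Hfr [S [Hsupp Hconst]]]; split; [|exact Hfr].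
    exists S; apply fun_supports_of_values; [|exact Hconst].
    intro x; apply supports_of_supp, Hsupp.
Qed.
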